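(* Let $G$ be a finite simple connected graph with exactly $h$ holes. Suppose that all the holes in $G$ are pairwise edge-disjoint, that $G$ has at most one non-edge maximal clique, and that the clique number satisfies $\omega(G)=h+1$. Let $K$ be a clique of $G$ with $|V(K)|=\omega(G)$. Then there exists an acyclic digraph $D$ such that $C(D)=G\cup\{i_1,i_2\}$, where $i_1,i_2$ are two new isolated vertices, and all vertices of $K$ have $i_2$ as a common out-neighbor in $D$. In particular, $k(G)\le 2$.
   Context: A hole of a graph is an induced (chordless) cycle of length at least $4$. A clique is a complete subgraph; a clique is non-edge if it has at least $3$ vertices. $\omega(G)$ is the maximum number of vertices of a clique in $G$. For a digraph $D=(V,A)$, its competition graph $C(D)$ has vertex set $V$, with distinct $x,y$ adjacent iff there is $v\in V$ with $(x,v),(y,v)\in A$. The competition number $k(G)$ is the smallest $k\ge 0$ such that $G$ together with $k$ new isolated vertices is the competition graph of an acyclic digraph. $G\cup\{i_1,i_2\}$ denotes the disjoint union of $G$ with two isolated vertices. *)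

From mathcomp Require Import all_boot.
Set Implicit Arguments. Unset Strict Implicit. Unset Printing Implicit Defensive.

Section Graphs.
Variable T : finType.

Definition simple_graph (e : rel T) : Prop := symmetric e /\ irreflexive e.

Definition connected_graph (e : rel T) : Prop := forall x y, connect e x y.

(* S is the vertex set of a hole: an induced (chordless) cycle of length >= 4.
   s lists the vertices of the cycle in cyclic order; two vertices of S are
   adjacent in G iff they are consecutive on the cycle. *)
Definition is_hole (e : rel T) (S : {set T}) : Prop :=
  exists s : seq T,
    [/\ uniq s, 4 <= size s, (forall x, (x \in S) = (x \in s)) &
       forall x y, x \in s -> y \in s ->
         e x y = (index y s == (index x s).+1 %% size s)
              || (index x s == (index y s).+1 %% size s)].

Definition num_holes (e : rel T) (h : nat) : Prop :=
  exists H : {set {set T}}, (forall S, S \in H <-> is_hole e S) /\ #|H| = h.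

(* distinct holes share no edge (edges of an induced cycle are the G-edges inside it) *)
Definition holes_edge_disjoint (e : rel T) : Prop :=
  forall S1 S2, is_hole e S1 -> is_hole e S2 -> S1 <> S2 ->
    forall x y, x \in S1 -> y \in S1 -> x \in S2 -> y \in S2 -> ~~ e x y.

Definition is_clique (e : rel T) (S : {set T}) : bool :=
  [forall x in S, forall y in S, (x != y) ==> e x y].

Definition maximal_clique (e : rel T) (S : {set T}) : Prop :=
  is_clique e S /\ forall S' : {set T}, is_clique e S' -> S \subset S' -> S' = S.

(* non-edge clique: at least 3 vertices *)
Definition at_most_one_nonedge_maxclique (e : rel T) : Prop :=
  forall Q1 Q2, maximal_clique e Q1 -> 3 <= #|Q1| ->
                maximal_clique e Q2 -> 3 <= #|Q2| -> Q1 = Q2.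

Definition omega (e : rel T) : nat := \max_(S : {set T} | is_clique e S) #|S|.

Definition add_isolated (k : nat) (e : rel T) : rel (T + 'I_k) :=
  fun u v => match u, v with inl x, inl y => e x y | _, _ => false end.

End Graphs.

Definition acyclic (V : finType) (a : rel V) : Prop :=
  forall x y, a x y -> ~~ connect a y x.

Definition competition_graph (V : finType) (a : rel V) : rel V :=
  fun x y => (x != y) && [exists v, a x v && a y v].

Definition comp_with_isolated (T : finType) (e : rel T) (k : nat) : Prop :=
  exists a : rel (T + 'I_k), acyclic a /\ competition_graph a =2 @add_isolated T k e.

Definition competition_number_le (T : finType) (e : rel T) (m : nat) : Prop :=
  exists k, k <= m /\ comp_with_isolated e k.

From Stdlib Require Import Lia.
From mathcomp Require Import all_boot zify.

Set Implicit Arguments. Unset Strict Implicit. Unset Printing Implicit Defensive.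

(* 1. Realization with sinks (realizes_with_sinks): a graph on S with degree sum d and
      4 + d <= 2(|X| + |S|) is realized, on S, as the competition graph of a ranked
      digraph whose arcs go from S into S and a set X of sinks.  Induction on |S|,
      re-inserting a vertex of minimum degree.
   2. Edge bound (edge_potential_full): every triangle of G lies in K, so a vertex
      attached to a connected part C containing K with k neighbours there closes
      k - 1 new holes (hole_through, built along a breadth-first distance); growing C
      from K to all of G yields 2|E(G) - E(K)| + 2|K| <= 2|V(G)| + 2h.
   3. Since |K| = h + 1, step 1 applies to G - E(K) with the single sink i1; adding i2
      as a common out-neighbour of K (realizes_add_sink) restores the edges of K
      (competition_with_clique_sink), which gives theorem1. *)

Section Ranking.
Variable V : finType.

Definition ranked (a : rel V) : Prop :=
  exists r : V -> nat, forall x y, a x y -> r y < r x.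

Lemma ranked_acyclic (a : rel V) : ranked a -> acyclic a.
Proof.
case=> r ar.
have descend z p : path a z p -> r (last z p) <= r z.
  elim: p z => [|w p IH] z //= /andP [azw /IH le_w].
  exact: leq_trans le_w (ltnW (ar _ _ azw)).
move=> x y axy; apply/negP => /connectP [p /descend].
by move=> le_yx lst; move: le_yx; rewrite -lst leqNgt ar.
Qed.

End Ranking.

(* Arithmetic core of the induction below: a vertex of minimum degree d in an
   s-vertex graph obeying the potential bound has at most as many neighbours as
   there are sinks. *)
Lemma min_degree_le_sinks (d s x : nat) :
  0 < x -> d < s -> d * s + 4 <= 2 * (x + s) -> d <= x.
Proof. by move=> x_gt0 ds pot; case: (leqP d 1) => [|d_gt1]; [lia | nia]. Qed.

Section Realization.
Variables (V : finType) (f : rel V).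
Hypotheses (fsym : symmetric f) (firr : irreflexive f).

Lemma injection_into (A B : {set V}) : #|A| <= #|B| ->
  exists g : V -> V, {in A, forall x, g x \in B} /\ {in A &, injective g}.
Proof.
move=> le_AB; pose g x := nth x (enum B) (index x (enum A)).
have idx_lt x : x \in A -> index x (enum A) < size (enum B).
  by move=> xA; rewrite -cardE (leq_trans _ le_AB) // cardE index_mem mem_enum.
exists g; split=> [x xA | x y xA yA]; first by rewrite -mem_enum mem_nth ?idx_lt.
rewrite /g [nth y _ _](set_nth_default x) ?idx_lt // => /eqP.
rewrite nth_uniq ?enum_uniq ?idx_lt // => /eqP.
by move/(congr1 (nth x (enum A))); rewrite !nth_index ?mem_enum.
Qed.

Definition degree_in (S : {set V}) (x : V) : nat := #|[set y in S | f x y]|.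
Definition degree_sum (S : {set V}) : nat := \sum_(x in S) degree_in S x.

Lemma degree_sumD1 (S : {set V}) (v : V) : v \in S ->
  degree_sum S = degree_sum (S :\ v) + (degree_in S v).*2.
Proof.
move=> vS; rewrite /degree_sum (big_setD1 v vS) /= addnC -addnn addnA; congr (_ + _).
have degD1 x : x \in S :\ v -> degree_in S x = degree_in (S :\ v) x + f x v.
  rewrite !inE => /andP [xv _]; rewrite /degree_in (cardsD1 v) inE vS /= addnC.
  by congr (_ + _); apply: eq_card => y; rewrite !inE andbA.
rewrite (eq_bigr _ degD1) big_split /=; congr (_ + _).
transitivity (\sum_(i in S :\ v | f i v) 1).
  by rewrite big_mkcondr; apply: eq_bigr => i _; case: (f i v).
rewrite sum1_card; apply: eq_card => y; rewrite unfold_in /= !inE [f y v]fsym.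
by case: (eqVneq y v) => [->|]; rewrite ?firr ?andbF.
Qed.

Definition realizes (S X : {set V}) (b : rel V) : Prop :=
  [/\ ranked b,
      forall x y, b x y -> x \in S,
      forall x y, b x y -> y \in X :|: S &
      forall x y, x != y -> (exists w, b x w && b y w) <-> [&& x \in S, y \in S & f x y]].

Lemma realizes_set0 (X : {set V}) : realizes set0 X (fun _ _ => false).
Proof.
split=> // [|x y _]; first by exists (fun _ => 0).
by rewrite inE; split=> [[]|].
Qed.

Section Extension.
(* One inductive step: a vertex v of S is re-inserted; its neighbours N get private sinks
   g y in X, v points to all of them, and v replaces them as a sink for S minus v. *)
Variables (S X : {set V}) (v : V) (g : V -> V).
Let N := [set y in S | f v y].
Let D := g @: N.
Hypotheses (vS : v \in S) (disjSX : [disjoint S & X]).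
Hypotheses (gX : {in N, forall y, g y \in X}) (ginj : {in N &, injective g}).

Definition extend (b : rel V) : rel V :=
  fun x y => b x y || (y \in D) && ((x == v) || (x \in N) && (g x == y)).

Lemma private_sinks_in_X : D \subset X.
Proof. by apply/subsetP => _ /imsetP [y yN ->]; exact: gX. Qed.

Lemma private_sinks_notin_S (x : V) : x \in S -> x \notin D.
Proof.
move=> xS; apply: contraFN (disjointFr disjSX xS).
exact: (subsetP private_sinks_in_X).
Qed.

Lemma realizes_extend (b : rel V) :
  realizes (S :\ v) (v |: (X :\: D)) b -> realizes S X (extend b).
Proof.
case=> [[r br] bsrc btgt bcomp].
have DX := private_sinks_in_X; have notD := private_sinks_notin_S.
have NS y : y \in N -> y \in S by rewrite inE => /andP [].
have bS x y : b x y -> x \in S by move=> /bsrc; rewrite inE => /andP [].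
have bD x y : b x y -> y \notin D.
  move=> /btgt; rewrite !inE => /orP [/orP [/eqP -> | /andP [] //] | /andP [_ /notD //]].
  exact: notD.
have newS x y : (x == v) || (x \in N) && (g x == y) -> x \in S.
  by case/orP => [/eqP -> // | /andP [/NS]].
split.
- exists (fun y => if y \in D then 0 else (r y).+1) => x y /orP [bxy | /andP [yD /newS xS]].
    by rewrite (negbTE (bD _ _ bxy)) (negbTE (notD _ (bS _ _ bxy))) ltnS br.
  by rewrite yD (negbTE (notD _ xS)).
- by move=> x y /orP [/bS // | /andP [_ /newS]].
- move=> x y /orP [/btgt | /andP [/(subsetP DX) yX _]]; last by rewrite inE yX.
  by rewrite !inE => /orP [/orP [/eqP -> | /andP [_ ->]] | /andP [_ ->]]; rewrite ?vS ?orbT.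
move=> x y xy; split.
  case=> w /andP [bxw byw]; case wD: (w \in D); last first.
    move: bxw byw; rewrite /extend wD !orbF => bxw byw.
    have := (bcomp x y xy).1 (ex_intro _ w (introT andP (conj bxw byw))).
    by rewrite !inE => /and3P [/andP [_ ->] /andP [_ ->] ->].
  have nb z : b z w = false by apply/negP => /bD; rewrite wD.
  move: bxw byw; rewrite /extend !nb wD /=.
  case/orP => [/eqP Ex | /andP [xN /eqP gx]]; case/orP => [/eqP Ey | /andP [yN /eqP gy]].
  - by rewrite Ex Ey eqxx in xy.
  - by move: yN; rewrite Ex vS inE => /andP [-> ->].
  - by move: xN; rewrite Ey vS inE fsym => /andP [-> ->].
  - by rewrite (ginj xN yN (etrans gx (esym gy))) eqxx in xy.
case/and3P => xS yS fxy.
have inN z : z \in S -> f v z -> z \in N by rewrite inE => ->.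
have gD z : z \in N -> g z \in D by move=> zN; apply: imset_f.
case: (eqVneq x v) => [xv | xv]; [|case: (eqVneq y v) => [yv | yv]].
- have yN : y \in N by rewrite inN // -xv.
  by exists (g y); rewrite /extend gD // yN xv !eqxx /= !orbT.
- have xN : x \in N by rewrite inN // -yv fsym.
  by exists (g x); rewrite /extend gD // xN yv !eqxx /= !orbT.
have [w /andP [bxw byw]] : exists w, b x w && b y w.
  by apply/(bcomp x y xy); rewrite !inE xv yv xS yS fxy.
by exists w; rewrite /extend bxw byw.
Qed.

End Extension.

(* Induction on |S|: a vertex v of minimum degree d has at most
   |X| neighbours; each receives a private sink, v points to these d sinks, and v
   replaces them as a sink for S minus v, which satisfies the same bound. *)
Theorem realizes_with_sinks (S X : {set V}) :
  [disjoint S & X] -> 0 < #|X| -> 4 + degree_sum S <= 2 * (#|X| + #|S|) ->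
  exists b, realizes S X b.
Proof.
move: {2}#|S| (erefl #|S|) => n; elim: n S X => [|n IH] S X cS disjSX X_gt0 pot.
  exists (fun _ _ => false).
  by move/eqP: cS; rewrite cards_eq0 => /eqP ->; apply: realizes_set0.
have /set0Pn [v0 v0S] : S != set0 by rewrite -card_gt0 cS.
case: (arg_minnP (degree_in S) v0S) => v vS vmin; have {}vS : v \in S by [].
set d := degree_in S v in vmin *.
have cSv : #|S :\ v| = n by move: cS; rewrite (cardsD1 v) vS add1n => -[].
have d_lt : d < #|S|.
  rewrite cS ltnS -cSv subset_leq_card //; apply/subsetP => y; rewrite !inE.
  by case/andP => yS fvy; rewrite yS andbT; apply: contraTneq fvy => ->; rewrite firr.
have d_le : d <= #|X|.
  apply: min_degree_le_sinks d_lt _ => //; apply: leq_trans pot; rewrite addnC leq_add2l.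
  by rewrite mulnC -sum_nat_const; apply: leq_sum.
have [g [gX ginj]] := injection_into d_le.
set D := g @: [set y in S | f v y].
have cD : #|D| = d by rewrite card_in_imset.
have DX : D \subset X by apply/subsetP => _ /imsetP [y yN ->]; exact: gX.
have vX : v \notin X by rewrite (disjointFr disjSX vS).
have [b rb] : exists b, realizes (S :\ v) (v |: (X :\: D)) b.
  apply: (IH _ _ cSv).
  - apply/pred0P => x /=; rewrite !inE; case: (eqVneq x v) => //= _.
    by case xS: (x \in S); rewrite // (disjointFr disjSX xS) andbF.
  - by rewrite card_gt0; apply/set0Pn; exists v; rewrite setU11.
  move: pot; rewrite (degree_sumD1 vS) cardsU1 !inE (negbTE vX) andbF /=.
  by rewrite cardsD (setIidPr DX) cD cSv cS -/d; lia.
by exists (extend S v g b); apply: realizes_extend.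
Qed.

Definition add_sink (b : rel V) (Q : {set V}) (z : V) : rel V :=
  fun x y => b x y || (y == z) && (x \in Q).

Lemma realizes_add_sink (S X Q : {set V}) (z : V) (b : rel V) :
  realizes S X b -> z \notin X :|: S -> z \notin Q ->
  [/\ ranked (add_sink b Q z),
      forall x, x \in Q -> add_sink b Q z x z &
      forall x y, x != y -> (exists w, add_sink b Q z x w && add_sink b Q z y w) <->
        [&& x \in S, y \in S & f x y] || (x \in Q) && (y \in Q)].
Proof.
case=> [[r br] bsrc btgt bcomp] zXS zQ.
have bz x y : b x y -> y != z by move=> /btgt; apply: contraTneq => ->.
have bz' x y : b x y -> x != z.
  by move=> /bsrc xS; apply: contraNneq zXS => <-; rewrite inE xS orbT.
split=> [|x xQ|x y xy].
- exists (fun y => if y == z then 0 else (r y).+1) => x y /orP [bxy | /andP [/eqP -> xQ]].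
    by rewrite (negbTE (bz _ _ bxy)) (negbTE (bz' _ _ bxy)) ltnS br.
  by rewrite eqxx ifN //; apply: contraNneq zQ => <-.
- by rewrite /add_sink eqxx xQ orbT.
split.
- case=> w; rewrite /add_sink; case: (eqVneq w z) => [-> | wz] /=; last first.
    by rewrite !orbF => bw; apply/orP; left; apply/(bcomp x y xy); exists w.
  have nbz u : b u z = false by apply/negbTE/negP => /bz; rewrite eqxx.
  by rewrite !nbz /= => ->; rewrite orbT.
case/orP => [/(bcomp x y xy) [w /andP [bxw byw]] | /andP [xQ yQ]].
  by exists w; rewrite /add_sink bxw byw.
by exists z; rewrite /add_sink eqxx xQ yQ !orbT.
Qed.

End Realization.

Section Cliques.
Variables (T : finType) (e : rel T).
Hypotheses (e_sym : symmetric e) (e_irr : irreflexive e).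

Lemma clique_adj (K : {set T}) (x y : T) :
  is_clique e K -> x \in K -> y \in K -> x != y -> e x y.
Proof.
move=> /forall_inP /(_ x) Kc xK yK.
by move: (Kc xK) => /forall_inP /(_ y yK) /implyP.
Qed.

Lemma clique_le_omega (S : {set T}) : is_clique e S -> #|S| <= omega e.
Proof. by move=> cS; apply: (leq_bigmax_cond (F := fun S : {set T} => #|S|)). Qed.

(* Every triangle of G lies in K, when K is a maximum clique and G has at most one
   maximal clique with 3 or more vertices: the triangle extends to a maximal clique,
   which must then be K. *)
Lemma triangle_in_max_clique (K : {set T}) :
  at_most_one_nonedge_maxclique e -> is_clique e K -> #|K| = omega e ->
  forall x y z, e x y -> e y z -> e x z -> x \in K.
Proof.
move=> amo Kc cK x y z exy eyz exz.
pose Q0 := x |: (y |: [set z]).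
have clQ0 : is_clique e Q0.
  apply/forall_inP => a aQ; apply/forall_inP => c cQ; apply/implyP.
  move: aQ cQ; rewrite !inE.
  by case/or3P => /eqP ->; case/or3P => /eqP ->;
    rewrite ?eqxx // => _; rewrite // e_sym.
have cQ0 : #|Q0| = 3.
  have neq a c : e a c -> a != c by apply: contraTneq => ->; rewrite e_irr.
  by rewrite /Q0 !cardsU1 cards1 !inE negb_or !neq.
have maxK : maximal_clique e K.
  by split=> // Q cQ KQ; apply/eqP; rewrite eq_sym eqEcard KQ cK clique_le_omega.
have [Q /andP [cQ Q0Q] Qmax] := @arg_maxnP _ Q0 (fun S => is_clique e S && (Q0 \subset S))
  (fun S => #|S|) (introT andP (conj clQ0 (subxx _))).
have maxQ : maximal_clique e Q.
  split=> // Q' cQ' QQ'; apply/eqP; rewrite eq_sym eqEcard QQ' /=.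
  by apply: Qmax; rewrite cQ' (subset_trans Q0Q QQ').
have Q3 : 3 <= #|Q| by rewrite -cQ0 subset_leq_card.
have K3 : 3 <= #|K| by rewrite cK -cQ0 clique_le_omega.
by rewrite -(amo Q K maxQ Q3 maxK K3) (subsetP Q0Q) // !inE eqxx.
Qed.

End Cliques.

Definition outside_edges (T : finType) (e : rel T) (K : {set T}) : rel T :=
  [rel x y | e x y && ~~ ((x \in K) && (y \in K))].

Lemma outside_edges_sym (T : finType) (e : rel T) (K : {set T}) :
  symmetric e -> symmetric (outside_edges e K).
Proof. by move=> e_sym x y; rewrite /outside_edges /= e_sym [(y \in K) && _]andbC. Qed.

Lemma outside_edges_irr (T : finType) (e : rel T) (K : {set T}) :
  irreflexive e -> irreflexive (outside_edges e K).
Proof. by move=> e_irr x; rewrite /outside_edges /= e_irr. Qed.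

Lemma degree_sum_inl (T : finType) (k : nat) (f : rel T) :
  degree_sum (@add_isolated T k f) (inl @: [set: T]) = degree_sum f [set: T].
Proof.
have inl_inj : injective (@inl T 'I_k) by move=> x y [].
rewrite /degree_sum big_imset /=; last by move=> x y _ _ /inl_inj.
apply: eq_bigr => x _; rewrite /degree_in -(card_imset _ inl_inj).
apply: eq_card => -[u | i]; rewrite !inE.
  by rewrite !(mem_imset _ _ inl_inj) !inE.
by rewrite andbF; symmetry; apply/negbTE/negP => /imsetP [? _ []].
Qed.

(* If G has few edges outside a clique K, namely 4 + 2|E(G - E(K))| <= 2(|V| + 1),
   then G plus two isolated vertices i1, i2 is the competition graph of an acyclic
   digraph in which every vertex of K points to i2: realize G - E(K) with the single
   sink i1, then add i2 as a common out-neighbour of K. *)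
Lemma competition_with_clique_sink (T : finType) (e : rel T) (K : {set T}) :
  symmetric e -> irreflexive e -> is_clique e K ->
  4 + degree_sum (outside_edges e K) [set: T] <= 2 * (1 + #|T|) ->
  exists a : rel (T + 'I_2),
    [/\ acyclic a, competition_graph a =2 @add_isolated T 2 e &
        forall v, v \in K -> a (inl v) (inr ord_max)].
Proof.
move=> e_sym e_irr Kc pot.
set f := @add_isolated T 2 (outside_edges e K).
have f_sym : symmetric f by case=> [x|i] [y|j] //=; apply: outside_edges_sym.
have f_irr : irreflexive f by case=> [x|i] //=; apply: outside_edges_irr.
pose S : {set T + 'I_2} := inl @: [set: T]; pose X : {set T + 'I_2} := [set inr ord0].
have inl_inj : injective (@inl T 'I_2) by move=> x y [].
have notinl (A : {set T}) (i : 'I_2) : (inr i : T + 'I_2) \notin inl @: A.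
  by apply/negP => /imsetP [? _ []].
have disjSX : [disjoint S & X].
  rewrite -setI_eq0; apply/eqP/setP => -[x|i]; rewrite !inE /=.
    by rewrite andbF.
  by rewrite (negbTE (notinl _ _)).
have X_gt0 : 0 < #|X| by rewrite cards1.
have potS : 4 + degree_sum f S <= 2 * (#|X| + #|S|).
  by rewrite cards1 card_imset ?cardsT ?degree_sum_inl // => x y [].
have [b rb] := realizes_with_sinks f_sym f_irr disjSX X_gt0 potS.
have zXS : inr ord_max \notin X :|: S by rewrite !inE (negbTE (notinl _ _)).
have [a_ranked Ksink comp] := realizes_add_sink rb zXS (notinl K ord_max).
(* On distinct vertices, the two sinks together produce exactly the edges of G. *)
have key x y : x != y ->
    ([&& x \in S, y \in S & f x y] || (x \in inl @: K) && (y \in inl @: K))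
    = @add_isolated T 2 e x y.
  case: x y => [u|i] [u'|i'] xy; rewrite ?(negbTE (notinl _ _)) ?andbF //=.
  rewrite !(mem_imset _ _ inl_inj) !inE /outside_edges /=.
  case: (boolP ((u \in K) && (u' \in K))) => [/andP [uK u'K] | _]; rewrite ?andbT ?orbF //.
  by rewrite orbT (clique_adj Kc uK u'K) //; apply: contraNneq xy => ->.
exists (add_sink b (inl @: K) (inr ord_max)); split.
- exact: ranked_acyclic.
- move=> x y; rewrite /competition_graph; case: (eqVneq x y) => [<- | xy] /=.
    by case: x => //= u; rewrite e_irr.
  apply/existsP/idP => [[w aw] | exy]; first by rewrite -key //; apply/(comp x y xy); exists w.
  by apply/(comp x y xy); rewrite key.
- by move=> v vK; apply: Ksink; apply: imset_f.
Qed.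

Section Distances.
Variables (T : finType) (e : rel T).
Hypothesis e_sym : symmetric e.

Definition induced (C : {set T}) : rel T := [rel x y | [&& x \in C, y \in C & e x y]].
Definition connected_in (C : {set T}) : Prop :=
  forall x y, x \in C -> y \in C -> connect (induced C) x y.

Definition step_down (d : T -> nat) : rel T := [rel x y | e x y && ((d y).+1 == d x)].

Definition bfs_distance (C : {set T}) (a0 : T) (d : T -> nat) : Prop :=
  [/\ forall x, x \in C -> d x = 0 -> x = a0,
      forall x, x \in C -> 0 < d x -> exists2 y, y \in C & step_down d x y &
      forall x y, x \in C -> y \in C -> e x y -> d x <= (d y).+1].

Fixpoint ball (C : {set T}) (a0 : T) (n : nat) : {set T} :=
  if n is n'.+1 then ball C a0 n' :|: [set y in C | [exists z in ball C a0 n', e z y]]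
  else [set a0].

Lemma ball_sub (C : {set T}) (a0 : T) (n : nat) : a0 \in C -> ball C a0 n \subset C.
Proof.
move=> a0C; elim: n => [|n IH] /=; first by rewrite sub1set.
by rewrite subUset IH; apply/subsetP => y; rewrite inE => /andP [].
Qed.

Lemma ball_path (C : {set T}) (a0 z : T) (p : seq T) (n : nat) :
  z \in ball C a0 n -> path (induced C) z p -> last z p \in ball C a0 (n + size p).
Proof.
elim: p z n => [|y p IH] z n zn /=; first by rewrite addn0.
case/andP => /and3P [_ yC ezy] pth; rewrite addnS -addSn; apply: IH pth.
by rewrite /= !inE yC /=; apply/orP; right; apply/exists_inP; exists z.
Qed.

(* A connected C carries a breadth-first distance from any of its vertices: the index
   of the first ball containing the vertex. *)
Lemma bfs_distance_exists (C : {set T}) (a0 : T) :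
  a0 \in C -> connected_in C -> exists d, bfs_distance C a0 d.
Proof.
move=> a0C conn.
have reach x : exists n, (x \in C) ==> (x \in ball C a0 n).
  case xC: (x \in C); last by exists 0.
  have /connectP [p pth ->] := conn a0 x a0C xC.
  by exists (0 + size p); apply: ball_path pth; rewrite inE.
pose d x := ex_minn (reach x).
have d_ball x : x \in C -> x \in ball C a0 (d x).
  by move=> xC; rewrite /d; case: ex_minnP => m; rewrite xC.
have d_min x n : x \in ball C a0 n -> d x <= n.
  move=> xn; rewrite /d; case: ex_minnP => m _; apply.
  by rewrite xn implybT.
have d_lip x y : x \in C -> y \in C -> e x y -> d x <= (d y).+1.
  move=> xC yC exy; apply: d_min; rewrite /= !inE xC /=; apply/orP; right.
  by apply/exists_inP; exists y; rewrite ?d_ball // e_sym.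
exists d; split=> // [x xC d0 | x xC].
  by have := d_ball x xC; rewrite d0 inE => /eqP.
case dx: (d x) => [//|m] _.
have := d_ball x xC; rewrite dx /= !inE => /orP [/d_min | /andP [_ /exists_inP [z zm ezx]]].
  by rewrite dx ltnn.
have zC : z \in C by apply: (subsetP (ball_sub m a0C)).
have lip : d x <= (d z).+1 by apply: d_lip; rewrite // e_sym.
by exists z; rewrite // /step_down /= e_sym ezx eqn_leq lip andbT dx ltnS d_min.
Qed.

Lemma connected_in_add (C : {set T}) (w x0 : T) :
  connected_in C -> x0 \in C -> e w x0 -> connected_in (w |: C).
Proof.
move=> conn x0C ewx.
have lift a b : connect (induced C) a b -> connect (induced (w |: C)) a b.
  apply: connect_sub => u u' /and3P [uC u'C euu'].
  by apply: connect1; rewrite /induced /= !inE uC u'C euu' !orbT.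
have wx : connect (induced (w |: C)) w x0.
  by apply: connect1; rewrite /induced /= !inE eqxx x0C ewx orbT.
have xw : connect (induced (w |: C)) x0 w.
  by apply: connect1; rewrite /induced /= !inE eqxx x0C e_sym ewx orbT.
move=> x y /setU1P [-> | xC] /setU1P [-> | yC].
- exact: connect0.
- exact: connect_trans wx (lift _ _ (conn _ _ x0C yC)).
- exact: connect_trans (lift _ _ (conn _ _ xC x0C)) xw.
- exact: lift (conn _ _ xC yC).
Qed.

End Distances.

Lemma boundary_edge (T : finType) (e : rel T) (C : {set T}) (x y : T) :
  connected_graph e -> x \in C -> y \notin C -> exists u w, [/\ u \in C, w \notin C & e u w].
Proof.
move=> conn xC yC; have /connectP [p pth lst] := conn x y.
elim: p x xC pth lst => [|z p IH] x xC /=; first by move=> _ yx; rewrite yx xC in yC.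
case/andP => exz pth lst; case zC: (z \in C); first exact: IH zC pth lst.
by exists x, z; rewrite xC zC.
Qed.

(* The cyclic successor relation of is_hole, without the modulus. *)
Lemma eq_succ_mod (a b n : nat) : b < n ->
  (a == b.+1 %% n) = (a == b.+1) && (b.+1 < n) || (a == 0) && (b.+1 == n).
Proof.
move=> bn; case: (ltngtP b.+1 n) => [lt | gt | eq].
- by rewrite modn_small // andbT andbF orbF.
- lia.
- by rewrite eq modnn andbF andbT.
Qed.

Section Holes.
Variables (T : finType) (e : rel T).
Hypotheses (e_sym : symmetric e) (e_irr : irreflexive e).

Lemma close_induced_path (v : T) (s : seq T) :
  uniq (v :: s) -> 3 <= size s ->
  (forall i j, i < size s -> j < size s ->
     e (nth v s i) (nth v s j) = (j == i.+1) || (i == j.+1)) ->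
  (forall y, y \in s -> e v y = (y == head v s) || (y == last v s)) ->
  is_hole e [set x in v :: s].
Proof.
move=> uvs s3 adj_s adj_v; have us : uniq s by case/andP: uvs.
have ends j : j < size s ->
    e v (nth v s j) = (j == 0) || (j == (size s).-1).
  move=> js; rewrite adj_v ?mem_nth // -nth_last.
  have -> : head v s = nth v s 0 by case: s s3 {adj_s adj_v us uvs js}.
  have s_pos : 0 < size s by apply: leq_trans s3.
  by rewrite !nth_uniq // ?ltn_predL.
exists (v :: s); split=> //; first by move=> x; rewrite inE.
move=> x y xs ys.
rewrite -(nth_index v xs) -(nth_index v ys) !index_uniq ?index_mem //.
move: (index_mem x (v :: s)) (index_mem y (v :: s)); rewrite xs ys.
move: (index x (v :: s)) (index y (v :: s)) => [|i] [|j] /= Hi Hj.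
- by rewrite e_irr !eq_succ_mod //; apply/idP/idP => //; lia.
- by rewrite ends // !eq_succ_mod; [apply/idP/idP; lia | lia..].
- by rewrite e_sym ends // !eq_succ_mod; [apply/idP/idP; lia | lia..].
- by rewrite adj_s // !eq_succ_mod; [apply/idP/idP; lia | lia..].
Qed.

Section Geodesics.
Variables (C : {set T}) (d : T -> nat).
Hypothesis d_lip : forall x y, x \in C -> y \in C -> e x y -> d x <= (d y).+1.

Lemma step_down_level (z0 x : T) (p : seq T) : path (step_down e d) x p ->
  forall i, i < size (x :: p) -> d (nth z0 (x :: p) i) + i = d x.
Proof.
elim: p x => [|y p IH] x; first by move=> _ [|i] //=; rewrite addn0.
rewrite [path _ _ _]/= => /andP [/andP [_ /eqP dy] /IH lvl] [|i] /= Hi.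
  by rewrite addn0.
by rewrite addnS lvl.
Qed.

(* A step_down path inside C is a geodesic: it is simple and chordless, since levels
   of adjacent vertices of C differ by at most one. *)
Lemma geodesic_induced (z0 x : T) (p : seq T) :
  {subset x :: p <= C} -> path (step_down e d) x p ->
  uniq (x :: p) /\ forall i j, i < size (x :: p) -> j < size (x :: p) ->
    e (nth z0 (x :: p) i) (nth z0 (x :: p) j) = (j == i.+1) || (i == j.+1).
Proof.
move=> sub pth; have lvl := step_down_level z0 pth.
have inC i : i < size (x :: p) -> nth z0 (x :: p) i \in C by move=> Hi; rewrite sub ?mem_nth.
split=> [|i j Hi Hj].
  apply/(uniqP z0) => i j; rewrite !inE => Hi Hj Eij.
  by move: (lvl i Hi); rewrite Eij -(lvl j Hj) => /eqP; rewrite eqn_add2l => /eqP.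
have consec k : k < size p -> e (nth z0 (x :: p) k) (nth z0 (x :: p) k.+1).
  by move=> kp; move/(pathP z0): pth => /(_ k kp) /andP [].
apply/idP/idP => [eij | /orP [/eqP ji | /eqP ij]].
- have ij : i != j by apply: contraTneq eij => ->; rewrite e_irr.
  have := d_lip (inC i Hi) (inC j Hj) eij; rewrite e_sym in eij.
  have := d_lip (inC j Hj) (inC i Hi) eij; have := lvl i Hi; have := lvl j Hj.
  by lia.
- by rewrite ji consec // -ltnS -ji.
- by rewrite ij e_sym consec // -ltnS -ij.
Qed.

End Geodesics.

Lemma descend_to (C N : {set T}) (x0 : T) (d : T -> nat) :
  bfs_distance e C x0 d -> x0 \in N -> forall y, y \in C ->
  exists q, [/\ path (step_down e d) y q, all (mem C) (y :: q),
                last y q \in N & all [predC N] (belast y q)].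
Proof.
move=> [d0 down _] x0N y; move: {2}(d y) (erefl (d y)) => n.
elim: n y => [|n IH] y dy yC; case yN: (y \in N); try by exists [::]; rewrite /= yC yN.
  by rewrite (d0 y yC dy) x0N in yN.
have [z zC yz] : exists2 z, z \in C & step_down e d y z by apply: down; rewrite ?dy.
have dz : d z = n by move: yz => /andP [_]; rewrite dy eqSS => /eqP.
have [q [pth allC lastN inner]] := IH z dz zC.
by exists (z :: q); rewrite /= yz yC yN pth.
Qed.

(* For every
   other b in N, descending from b to N and closing through v gives a hole containing
   v and b in which every other vertex of N is strictly closer to x0 than b. *)
Lemma hole_through (C N : {set T}) (x0 v b : T) (d : T -> nat) :
  bfs_distance e C x0 d -> x0 \in N -> N \subset C -> v \notin C ->
  (forall y, y \in C -> e v y = (y \in N)) -> {in N &, forall y z, ~~ e y z} ->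
  b \in N -> b != x0 ->
  exists H : {set T}, [/\ is_hole e H, H \subset v |: C, v \in H, b \in H &
    forall y, y \in N -> y \in H -> y != b -> d y < d b].
Proof.
move=> dist x0N NC vC adj_v indep bN bx0; have [d0 down d_lip] := dist.
have bC : b \in C by apply: (subsetP NC).
have [y yC down_b] : exists2 y, y \in C & step_down e d b y.
  by apply: down; rewrite // lt0n; apply: contra bx0 => /eqP /(d0 b bC) ->.
have [q [pth allC lastN inner]] := descend_to dist x0N yC.
set s := b :: y :: q.
have sC : {subset s <= C} by move=> z /predU1P [-> // | /(allP allC)].
have spath : path (step_down e d) b (y :: q) by rewrite /= down_b.
have [us adj_s] := geodesic_induced d_lip v sC spath.
have Ns z : z \in s -> (z \in N) = (z == b) || (z == last y q).
  rewrite in_cons lastI mem_rcons in_cons => /or3P [/eqP -> | /eqP -> | zin].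
  - by rewrite bN eqxx.
  - by rewrite lastN eqxx orbT.
  have zN : z \notin N by move/allP: inner => /(_ z zin).
  rewrite (negbTE zN); symmetry; apply/negbTE/norP.
  by split; apply: contraNneq zN => ->.
have q_ne : 0 < size q.
  case: q {s sC spath us adj_s Ns} pth allC lastN inner => //= _ _ yN _.
  by move: down_b => /andP [eby _]; have := indep b y bN yN; rewrite eby.
exists [set z in v :: s]; split.
- apply: close_induced_path => //; last by move=> z zs; rewrite adj_v ?sC ?Ns.
  by rewrite cons_uniq us andbT; apply: contra vC => /sC.
- by apply/subsetP => z; rewrite !inE => /predU1P [-> | /sC ->]; rewrite ?eqxx ?orbT.
- by rewrite inE mem_head.
- by rewrite inE !in_cons eqxx orbT.
move=> z zN; rewrite inE in_cons => /predU1P [zv | zs] zb.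
  by move: vC; rewrite -zv (subsetP NC z zN).
move: (Ns z zs); rewrite zN (negbTE zb) /= => /esym /eqP ->.
have := step_down_level b spath (ltnSn (size (y :: q))).
by rewrite -last_nth /= => <-; rewrite addnS ltnS leq_addr.
Qed.

End Holes.

Section EdgeBound.
Variables (T : finType) (e : rel T) (K : {set T}) (Hset : {set {set T}}).
Hypotheses (e_sym : symmetric e) (e_irr : irreflexive e).
Hypothesis triangle_in_K : forall x y z, e x y -> e y z -> e x z -> x \in K.
Hypothesis holesP : forall H, H \in Hset <-> is_hole e H.

Local Notation e' := (outside_edges e K).

Definition holes_in (C : {set T}) : nat := #|[set H in Hset | H \subset C]|.

Definition edge_potential (C : {set T}) : Prop :=
  degree_sum e' C + 2 * #|K| <= 2 * #|C| + 2 * holes_in C.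

(* A vertex v outside a connected C containing K with neighbours N in C lies on at least
   |N| - 1 holes inside v + C: N is independent (a triangle through v would put v in
   K), and the holes built by hole_through for the b in N other than a fixed x0 are
   pairwise distinct, since b is the unique farthest vertex of N on its hole. *)
Lemma new_holes (C : {set T}) (v x0 : T) :
  K \subset C -> connected_in e C -> v \notin C -> x0 \in C -> e v x0 ->
  #|[set y in C | e v y]|.-1 <= #|[set H in Hset | (H \subset v |: C) && (v \in H)]|.
Proof.
move=> KC conn vC x0C evx0; set N := [set y in C | e v y].
have vK : v \notin K by apply: contra vC; apply: (subsetP KC).
have x0N : x0 \in N by rewrite inE x0C evx0.
have NC : N \subset C by apply/subsetP => y; rewrite inE => /andP [].
have adj_v y : y \in C -> e v y = (y \in N) by move=> yC; rewrite inE yC.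
have indep : {in N &, forall y z, ~~ e y z}.
  move=> y z; rewrite !inE => /andP [_ evy] /andP [_ evz]; apply/negP => eyz.
  by move: vK; rewrite (triangle_in_K evy eyz evz).
have [d dist] := bfs_distance_exists e_sym x0C conn.
pose good b H := [&& H \in Hset, H \subset v |: C, v \in H, b \in H &
  [forall y in N, (y \in H) && (y != b) ==> (d y < d b)]].
have good_ex b : b \in N :\ x0 -> exists H, good b H.
  rewrite in_setD1 => /andP [bx0 bN].
  have [H [hH Hsub vH bH Hfar]] := hole_through e_sym e_irr dist x0N NC vC adj_v indep bN bx0.
  exists H; apply/and5P; split=> //; first exact/holesP.
  by apply/forall_inP => y yN; apply/implyP => /andP [yH yb]; apply: Hfar.
pose ch b := odflt set0 [pick H | good b H].
have ch_good b : b \in N :\ x0 -> good b (ch b).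
  move=> /good_ex [H gH]; rewrite /ch; case: pickP => [H' // | none].
  by rewrite none in gH.
have ch_inj : {in N :\ x0 &, injective ch}.
  move=> b b' bN b'N E; apply/eqP; apply/negPn/negP => bb'.
  have /and5P [_ _ _ bH farb] := ch_good b bN.
  have /and5P [_ _ _ b'H farb'] := ch_good b' b'N; rewrite -E in b'H farb'.
  move: bN b'N; rewrite !in_setD1 => /andP [_ bN] /andP [_ b'N].
  have := forall_inP farb b' b'N; rewrite b'H eq_sym bb' /= => lt1.
  have := forall_inP farb' b bN; rewrite bH bb' /= => lt2.
  by have := ltn_trans lt1 lt2; rewrite ltnn.
have -> : #|N|.-1 = #|ch @: (N :\ x0)| by rewrite card_in_imset // (cardsD1 x0 N) x0N.
apply: subset_leq_card; apply/subsetP => _ /imsetP [b bN ->]; rewrite inE.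
by case/and5P: (ch_good b bN) => -> -> ->.
Qed.

(* Attaching a vertex v to C along an edge preserves the potential invariant: v brings
   |N| new edges and, by new_holes, at least |N| - 1 new holes. *)
Lemma potential_step (C : {set T}) (v x0 : T) :
  K \subset C -> connected_in e C -> edge_potential C ->
  v \notin C -> x0 \in C -> e v x0 -> edge_potential (v |: C).
Proof.
move=> KC conn pot vC x0C evx0; set N := [set y in C | e v y].
have vK : v \notin K by apply: contra vC; apply: (subsetP KC).
have N_gt0 : 0 < #|N| by rewrite card_gt0; apply/set0Pn; exists x0; rewrite inE x0C evx0.
have deg : degree_in e' (v |: C) v = #|N|.
  apply: eq_card => y; rewrite !inE /outside_edges /= (negbTE vK) andbT.
  by case: (eqVneq y v) => [-> | _] /=; rewrite ?e_irr ?andbF.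
have degsum : degree_sum e' (v |: C) = degree_sum e' C + #|N|.*2.
  have sym' := outside_edges_sym K e_sym; have irr' := outside_edges_irr K e_irr.
  by rewrite (degree_sumD1 sym' irr' (setU11 v C)) setU1K // deg.
set Old := [set H in Hset | H \subset C].
set New := [set H in Hset | (H \subset v |: C) && (v \in H)].
have holes : #|Old| + #|New| <= holes_in (v |: C).
  have disj : Old :&: New = set0.
    apply/setP => H; rewrite !inE; apply/negbTE/negP.
    by case/andP => /andP [_ /subsetP HC] /and3P [_ _ /HC]; rewrite (negbTE vC).
  rewrite -[_ + _]subn0 -(cards0 {set T}) -disj -cardsU; apply: subset_leq_card.
  apply/subsetP => H; rewrite !inE => /orP [/andP [-> HC] | /and3P [-> // _ _]].
  by rewrite (subset_trans HC) ?subsetUr.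
have := new_holes KC conn vC x0C evx0.
move: pot holes; rewrite /edge_potential degsum cardsU1 vC /holes_in -/Old -/N -/New.
lia.
Qed.

(* Growing C from K one boundary vertex at a time, the invariant reaches the whole
   vertex set of a connected graph. *)
Lemma edge_potential_full :
  connected_graph e -> is_clique e K -> 0 < #|K| -> edge_potential [set: T].
Proof.
move=> gconn Kc K_gt0.
suff grow n C : #|~: C| = n -> K \subset C -> connected_in e C -> edge_potential C ->
    edge_potential [set: T].
  apply: (grow _ K erefl) => // [x y xK yK|].
    case: (eqVneq x y) => [-> | xy]; first exact: connect0.
    by apply: connect1; rewrite /induced /= xK yK (clique_adj Kc xK yK xy).
  rewrite /edge_potential; have -> : degree_sum e' K = 0.
    apply: big1 => x xK; apply/eqP; rewrite cards_eq0; apply/eqP/setP => y.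
    by rewrite !inE /outside_edges /= xK; case: (y \in K); rewrite ?andbF.
  by rewrite add0n leq_addr.
elim: n C => [|n IH] C cC KC conn pot.
  suff CT : C = [set: T] by rewrite -CT.
  apply/setP => x; move/eqP: cC; rewrite cards_eq0 => /eqP /setP /(_ x).
  by rewrite !inE => /negbFE ->.
have /set0Pn [y] : ~: C != set0 by rewrite -card_gt0 cC.
rewrite inE => yC; have /set0Pn [x xK] : K != set0 by rewrite -card_gt0.
have [u [w [uC wC euw]]] := boundary_edge gconn (subsetP KC x xK) yC.
apply: (IH (w |: C)).
- by move: cC (cardsC C) (cardsC (w |: C)); rewrite cardsU1 wC; lia.
- exact: subset_trans KC (subsetUr _ _).
- by apply: connected_in_add uC _; rewrite // e_sym.
- by apply: potential_step uC _; rewrite // e_sym.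
Qed.

End EdgeBound.

Theorem theorem1 (T : finType) (e : rel T) (h : nat) (K : {set T}) :
  simple_graph e -> connected_graph e ->
  num_holes e h -> holes_edge_disjoint e ->
  at_most_one_nonedge_maxclique e ->
  omega e = h.+1 ->
  is_clique e K -> #|K| = omega e ->
  (exists a : rel (T + 'I_2),
     [/\ acyclic a,
         competition_graph a =2 @add_isolated T 2 e &
         forall v, v \in K -> a (inl v) (inr ord_max)])
  /\ competition_number_le e 2.
Proof.
move=> [e_sym e_irr] gconn [Hset [holesP cardH]] _ amo om Kc cK.
have triK := triangle_in_max_clique e_sym e_irr amo Kc cK.
have K_gt0 : 0 < #|K| by rewrite cK om.
have pot := edge_potential_full e_sym e_irr triK holesP gconn Kc K_gt0.
have few_holes : holes_in Hset [set: T] <= h.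
  by rewrite -cardH; apply: subset_leq_card; apply/subsetP => H; rewrite inE => /andP [].
have few_edges : 4 + degree_sum (outside_edges e K) [set: T] <= 2 * (1 + #|T|).
  by move: pot; rewrite /edge_potential cardsT cK om; lia.
have [a [acyc comp Ksink]] := competition_with_clique_sink e_sym e_irr Kc few_edges.
split; first by exists a.
by exists 2; split=> //; exists a.
Qed.
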